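(* Let $\mathcal{P}\subset\mathbb{R}^d$ be a finite set of $n$ item vectors, $\bm{q}\in\mathbb{R}^d$, $k>1$ an integer with $k\le n$, $\lambda\in[0,1]$, $\mu>0$, and assume $\langle\bm{x},\bm{y}\rangle\ge0$ for all $\bm{x},\bm{y}\in\mathcal{P}\cup\{\bm{q}\}$. Let $\mathcal{S}^*\in\arg\max_{\mathcal{T}\subseteq\mathcal{P},|\mathcal{T}|=k}f_{avg}(\mathcal{T})$ and let $\mathcal{S}$ be the output of the DualGreedy algorithm run with $f=f_{avg}$. Then $$f_{avg}(\mathcal{S})\ \ge\ \tfrac14 f_{avg}(\mathcal{S}^* )-\tfrac34\,div^*_{max},\qquad div^*_{max}=\max_{\bm{p}_x,\bm{p}_y\in\mathcal{P},\,\bm{p}_x\ne\bm{p}_y}\mu(1-\lambda)\langle\bm{p}_x,\bm{p}_y\rangle.$$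
   Context: For $\mathcal{S}\subseteq\mathcal{P}$, $f_{avg}(\mathcal{S}) = \frac{\lambda}{k}\sum_{\bm{p}\in\mathcal{S}}\langle\bm{p},\bm{q}\rangle - \frac{2\mu(1-\lambda)}{k(k-1)}\sum_{\{\bm{p},\bm{p}'\}\subseteq\mathcal{S},\,\bm{p}\neq\bm{p}'}\langle\bm{p},\bm{p}'\rangle$ (unordered pairs of distinct elements), and the marginal gain is $\Delta_f(\bm{p},\mathcal{S}) = f_{avg}(\mathcal{S}\cup\{\bm{p}\})-f_{avg}(\mathcal{S}) = \frac{\lambda}{k}\langle\bm{p},\bm{q}\rangle - \frac{2\mu(1-\lambda)}{k(k-1)}\sum_{\bm{p}'\in\mathcal{S}}\langle\bm{p},\bm{p}'\rangle$ for $\bm{p}\notin\mathcal{S}$. DualGreedy algorithm: initialize $\mathcal{S}_1=\mathcal{S}_2=\varnothing$. While $|\mathcal{S}_1|<k$ or $|\mathcal{S}_2|<k$: for each $j\in\{1,2\}$ with $|\mathcal{S}_j|<k$, let $\bm{p}_j^*\in\arg\max_{\bm{p}\in\mathcal{P}\setminus(\mathcal{S}_1\cup\mathcal{S}_2)}\Delta_f(\bm{p},\mathcal{S}_j)$ (if $|\mathcal{S}_j|=k$, $\bm{p}_j^*$ is undefined and its gain is treated as $-\infty$); if $\max_{j}\Delta_f(\bm{p}_j^*,\mathcal{S}_j)\le0$, stop; otherwise, if $\Delta_f(\bm{p}_1^*,\mathcal{S}_1)\ge\Delta_f(\bm{p}_2^*,\mathcal{S}_2)$ add $\bm{p}_1^*$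 to $\mathcal{S}_1$, else add $\bm{p}_2^*$ to $\mathcal{S}_2$. Output $\mathcal{S}\in\arg\max_{j\in\{1,2\}}f_{avg}(\mathcal{S}_j)$ (a set of at most $k$ items). *)

From mathcomp Require Import all_boot all_order all_algebra.
Set Implicit Arguments. Unset Strict Implicit. Unset Printing Implicit Defensive.
Import Order.TTheory GRing.Theory Num.Theory.
Local Open Scope ring_scope.

Definition dotv (R : realFieldType) (d : nat) (x y : 'rV[R]_d) : R :=
  \sum_(i < d) x 0 i * y 0 i.

Section DualGreedy.
Variables (R : realFieldType) (d n : nat) (p : 'I_n -> 'rV[R]_d) (q : 'rV[R]_d)
          (k : nat) (lam mu : R).

Definition favg (S : {set 'I_n}) : R :=
  lam / k%:R * (\sum_(i in S) dotv (p i) q)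
  - 2 * mu * (1 - lam) / (k%:R * (k%:R - 1)) *
      (\sum_(i in S) \sum_(j in S | (i < j)%N) dotv (p i) (p j)).

(* marginal gain Delta_f(p_i, S) (for i not in S) *)
Definition gain (S : {set 'I_n}) (i : 'I_n) : R :=
  lam / k%:R * dotv (p i) q
  - 2 * mu * (1 - lam) / (k%:R * (k%:R - 1)) * (\sum_(j in S) dotv (p i) (p j)).

Definition candidate (Sj So : {set 'I_n}) (i : 'I_n) : Prop :=
  [/\ (#|Sj| < k)%N, i \notin Sj :|: So &
      forall i', i' \notin Sj :|: So -> gain Sj i' <= gain Sj i].

Definition dg_step (st st' : {set 'I_n} * {set 'I_n}) : Prop :=
  let: (S1, S2) := st in
  (exists i, [/\ candidate S1 S2 i, 0 < gain S1 i,
     (forall i2, candidate S2 S1 i2 -> gain S2 i2 <= gain S1 i) &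
     st' = (i |: S1, S2)]) \/
  (exists i, [/\ candidate S2 S1 i, 0 < gain S2 i,
     (forall i1, candidate S1 S2 i1 -> gain S1 i1 < gain S2 i) &
     st' = (S1, i |: S2)]).

(* The loop has stopped: either both sets are full (no candidates, gains
   treated as -oo) or the maximal gain is <= 0. *)
Definition dg_stopped (st : {set 'I_n} * {set 'I_n}) : Prop :=
  let: (S1, S2) := st in
  (forall i, candidate S1 S2 i -> gain S1 i <= 0) /\
  (forall i, candidate S2 S1 i -> gain S2 i <= 0).

Inductive dg_reach : {set 'I_n} * {set 'I_n} -> Prop :=
| dg_reach0 : dg_reach (set0, set0)
| dg_reachS st st' : dg_reach st -> dg_step st st' -> dg_reach st'.

(* S is a possible output of DualGreedy (over all tie-breaking choices). *)
Definition dualgreedy_output (S : {set 'I_n}) : Prop :=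
  exists S1 S2, [/\ dg_reach (S1, S2), dg_stopped (S1, S2),
    (S = S1 \/ S = S2) & favg S1 <= favg S /\ favg S2 <= favg S].

End DualGreedy.

From Pilot Require Import Defs.
From mathcomp Require Import all_boot all_order all_algebra.
From mathcomp Require Import ring lra.
Import Order.TTheory GRing.Theory Num.Theory.
Set Implicit Arguments. Unset Strict Implicit. Unset Printing Implicit Defensive.
Local Open Scope ring_scope.

(* Write [u o = lam/k <p_o, q>] for the relevance of an item.  As all inner
   products are nonnegative, [f S <= sum_(o in S) u o], and adding [o] to a set
   of size [j] gains at least [u o - e j] with [e = 2 divmax / (k (k - 1))].
   Along a run of DualGreedy, each of the two sets [A] (the other being [B])
   keeps two certificates: every still unused item satisfies
   [k u o <= f A + divmax + k g] whenever [g] bounds the gains open to [A], and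
   the items of [S*] captured by [B] are paid for by the gains of [B].  When the
   loop stops all open gains are [<= 0], so
   [sum_(o in S* :\: A) u o <= f S1 + f S2 + divmax] for [A = S1, S2].  The two
   sets are disjoint, so every item of [S*] misses one of them, and summing
   yields [f S* <= 4 f S + 2 divmax]. *)

Lemma dotvC (R : realFieldType) d (x y : 'rV[R]_d) : dotv x y = dotv y x.
Proof. by apply: eq_bigr => i _; rewrite mulrC. Qed.

Lemma sum_pairsU1 (R : realFieldType) n (c : 'I_n -> 'I_n -> R) (S : {set 'I_n}) x :
  (forall i j, c i j = c j i) -> x \notin S ->
  \sum_(i in x |: S) \sum_(j in x |: S | (i < j)%N) c i j =
  \sum_(i in S) \sum_(j in S | (i < j)%N) c i j + \sum_(j in S) c x j.
Proof.
move=> cC xS.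
under eq_bigr => i _ do rewrite big_mkcondr /= (big_setU1 _ xS) /=.
rewrite (big_setU1 _ xS) /= ltnn add0r big_split /= addrA addrC; congr (_ + _).
  by apply: eq_bigr => i _; rewrite big_mkcondr.
rewrite -big_split /=; apply: eq_bigr => j jS.
have [_|_|/val_inj xj] := ltngtP x j.
- by rewrite addr0.
- by rewrite add0r cC.
- by move: jS; rewrite -xj (negbTE xS).
Qed.

Lemma sum_le_sumD_disjoint (R : numDomainType) (T : finType) (F : T -> R)
    (O A B : {set T}) :
  [disjoint A & B] -> (forall i, 0 <= F i) ->
  \sum_(i in O) F i <= \sum_(i in O :\: A) F i + \sum_(i in O :\: B) F i.
Proof.
move=> AB F_ge0.
rewrite (big_setID A) /= addrC lerD2l (big_setID (A := O :\: B) A) /=.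
have -> : (O :\: B) :&: A = O :&: A.
  by rewrite setDE -setIA (setIC _ A) -setDE (setDidPl AB).
by rewrite lerDl sumr_ge0.
Qed.

(* The [k - s] missing steps [j = s, ..., k - 1] each cost at most [g + e j]. *)
Lemma ler_slack_extend (R : realFieldType) (s k : nat) (u a e g : R) :
  (s <= k)%N -> 0 <= e -> 0 <= g ->
  s%:R * u <= a + e * (s%:R * (s%:R - 1)) / 2 ->
  ((s < k)%N -> u <= g + e * s%:R) ->
  k%:R * u <= a + e * (k%:R * (k%:R - 1)) / 2 + k%:R * g.
Proof.
move=> sk e_ge0 g_ge0 su_le u_le.
have sg_ge0 : 0 <= s%:R * g by rewrite mulr_ge0.
have [lt_sk|ks] := ltnP s k; last first.
  have -> : k = s by apply/eqP; rewrite eqn_leq ks sk.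
  lra.
have {}u_le := u_le lt_sk.
have ks_ge1 : s%:R + 1 <= k%:R :> R by rewrite natr1 ler_nat.
have : (k%:R - s%:R) * u <= (k%:R - s%:R) * (g + e * s%:R).
  by rewrite ler_wpM2l //; lra.
have : 0 <= e * ((k%:R - s%:R) * (k%:R - s%:R - 1)) :> R.
  by rewrite mulr_ge0 // mulr_ge0 //; lra.
nra.
Qed.

Section DualGreedyAnalysis.
Variables (R : realFieldType) (d n : nat) (p : 'I_n -> 'rV[R]_d) (q : 'rV[R]_d)
          (k : nat) (lam mu : R).

Local Notation f := (favg p q k lam mu).
Local Notation gain := (Defs.gain p q k lam mu).
Local Notation candidate := (Defs.candidate p q k lam mu).

Definition relevance (i : 'I_n) : R := lam / k%:R * dotv (p i) q.

Lemma relevance_ge0 i : 0 <= lam -> 0 <= dotv (p i) q -> 0 <= relevance i.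
Proof. by move=> lam_ge0 pq_ge0; rewrite mulr_ge0 ?divr_ge0. Qed.

Lemma favg0 : f set0 = 0.
Proof. by rewrite /favg !big_set0 !mulr0 subr0. Qed.

Lemma favgU1 (S : {set 'I_n}) x : x \notin S -> f (x |: S) = f S + gain S x.
Proof.
move=> xS; rewrite /favg /Defs.gain (big_setU1 _ xS) /=.
rewrite (@sum_pairsU1 _ _ (fun i j => dotv (p i) (p j))) //; first by ring.
by move=> i j; apply: dotvC.
Qed.

Lemma exists_candidate (A B : {set 'I_n}) o :
  (#|A| < k)%N -> o \notin A :|: B ->
  exists2 i, candidate A B i & gain A o <= gain A i.
Proof.
move=> ltAk oAB.
have [i i_free i_max] := @arg_maxP _ R _ o (fun i => i \notin A :|: B) (gain A) oAB.
by exists i; [split | exact: i_max].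
Qed.

Section Invariant.
Variables (e : R) (O : {set 'I_n}).
Hypothesis e_ge0 : 0 <= e.
Hypothesis gain_ge : forall (A : {set 'I_n}) o, o \notin A ->
  relevance o - e * #|A|%:R <= gain A o.

Local Notation slack s := (e * (s%:R * (s%:R - 1)) / 2).

(* Seen from the set [A], with [B] the other set: every unused item was worth
   at most each gain [A] collected (up to the penalty [e j] at step [j]), and
   each item of [O] that [B] took had a gain at least as large as any gain
   then available to [A]. *)
Definition dg_invariant (A B : {set 'I_n}) : Prop :=
  [/\ [disjoint A & B], (#|A| <= k)%N, 0 <= f A,
      forall o, o \notin A :|: B -> #|A|%:R * relevance o <= f A + slack #|A| &
      \sum_(o in O :&: B) (k%:R * relevance o - f A - slack k) <= k%:R * f B].

Lemma dg_invariant0 : dg_invariant set0 set0.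
Proof.
split; rewrite ?favg0 ?cards0 //.
- by rewrite disjoints_subset sub0set.
- by move=> o _; rewrite !(mul0r, mulr0, add0r).
- by rewrite setI0 big_set0 mulr0.
Qed.

Lemma relevance_unused_le (A B : {set 'I_n}) o g :
  dg_invariant A B -> o \notin A :|: B -> 0 <= g ->
  (forall i, candidate A B i -> gain A i <= g) ->
  k%:R * relevance o <= f A + slack k + k%:R * g.
Proof.
move=> [_ leAk _ unused _] oAB g_ge0 gain_le.
apply: (ler_slack_extend leAk) => // [|ltAk]; first exact: unused.
have [i cand_i le_oi] := exists_candidate ltAk oAB.
have oA : o \notin A by move: oAB; rewrite in_setU negb_or => /andP[].
have := gain_ge oA; have := gain_le i cand_i; lra.
Qed.

Lemma dg_invariantU1_own (A B : {set 'I_n}) x :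
  dg_invariant A B -> candidate A B x -> 0 < gain A x -> dg_invariant (x |: A) B.
Proof.
move=> [disjAB leAk fA_ge0 unused taken] [ltAk xAB x_max] gain_gt0.
have [xA xB] : x \notin A /\ x \notin B by apply/andP; rewrite -negb_or -in_setU.
have fxA := favgU1 xA.
have cardxA : #|x |: A| = #|A|.+1 by rewrite cardsU1 xA.
split.
- by rewrite disjoints_subset subUset sub1set inE xB -disjoints_subset.
- by rewrite cardxA.
- by rewrite fxA; lra.
- move=> o; rewrite !inE => /norP[/norP[_ oA] oB].
  have oAB : o \notin A :|: B by rewrite in_setU negb_or oA oB.
  have := unused o oAB; have := x_max o oAB; have := gain_ge oA.
  rewrite cardxA -[#|A|.+1%:R]natr1 fxA; set s := #|A|%:R; nra.
- apply: le_trans taken; apply: ler_sum => o _; rewrite fxA; lra.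
Qed.

Lemma dg_invariantU1_other (A B : {set 'I_n}) x :
  dg_invariant A B -> candidate B A x -> 0 < gain B x ->
  (forall i, candidate A B i -> gain A i <= gain B x) ->
  dg_invariant A (x |: B).
Proof.
move=> inv [_ xBA _] gain_gt0 gain_le; have [disjAB leAk fA_ge0 unused taken] := inv.
have [xB xA] : x \notin B /\ x \notin A by apply/andP; rewrite -negb_or -in_setU.
have xAB : x \notin A :|: B by rewrite in_setU negb_or xA xB.
split=> //.
- by rewrite disjoint_sym disjoints_subset subUset sub1set inE xA
     -disjoints_subset disjoint_sym.
- move=> o; rewrite !inE => /norP[oA /norP[_ oB]].
  by apply: unused; rewrite in_setU negb_or oA oB.
have x_taken := relevance_unused_le inv xAB (ltW gain_gt0) gain_le.
rewrite favgU1 // [k%:R * (f B + _)]mulrDr.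
have [xO|xNO] := boolP (x \in O).
- have -> : O :&: (x |: B) = x |: (O :&: B).
    by apply/setP => i; rewrite !inE; case: eqP => // ->; rewrite xO.
  rewrite big_setU1 /=; last by rewrite inE (negbTE xB) andbF.
  lra.
- have -> : O :&: (x |: B) = O :&: B.
    by apply/setP => i; rewrite !inE; case: eqP => // ->; rewrite (negbTE xNO).
  have : 0 <= k%:R * gain B x by rewrite mulr_ge0 // ltW.
  lra.
Qed.

Lemma dg_reach_invariant st :
  dg_reach p q k lam mu st -> dg_invariant st.1 st.2 /\ dg_invariant st.2 st.1.
Proof.
elim=> [|[S1 S2] st' _ [inv12 inv21]]; first by split; apply: dg_invariant0.
case=> [[i [cand gain_gt0 gain_le ->]] | [i [cand gain_gt0 gain_lt ->]]]; split.
- exact: dg_invariantU1_own.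
- exact: dg_invariantU1_other.
- by apply: dg_invariantU1_other => // j /gain_lt /ltW.
- exact: dg_invariantU1_own.
Qed.

Lemma dg_stopped_sum_le (A B : {set 'I_n}) :
  (0 < k)%N -> #|O| = k -> dg_invariant A B ->
  (forall i, candidate A B i -> gain A i <= 0) ->
  \sum_(o in O :\: A) relevance o <= f A + f B + slack k.
Proof.
move=> k_gt0 cardO inv stopA; have [disjAB _ fA_ge0 _ taken] := inv.
have c_ge0 : 0 <= slack k.
  case: (k) k_gt0 => // m _.
  by rewrite -[m.+1%:R]natr1 addrK !(divr_ge0, mulr_ge0, addr_ge0).
set c := slack k in taken c_ge0 *.
have unused_le o : o \notin A :|: B -> k%:R * relevance o - f A - c <= 0.
  move=> oAB; have := relevance_unused_le inv oAB (lexx 0) stopA.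
  by rewrite -/c mulr0; lra.
have sum_le : \sum_(o in O :\: A) (k%:R * relevance o - f A - c) <= k%:R * f B.
  rewrite (big_setID B) /=.
  have -> : (O :\: A) :&: B = O :&: B.
    by rewrite setDE -setIA (setIC _ B) -setDE (setDidPl _) // disjoint_sym.
  rewrite -[leRHS]addr0 lerD // sumr_le0 // => o.
  rewrite !inE => /andP[oB /andP[oA _]].
  by apply: unused_le; rewrite in_setU negb_or oA oB.
have sum_eq : \sum_(o in O :\: A) (k%:R * relevance o - f A - c) =
    k%:R * \sum_(o in O :\: A) relevance o - #|O :\: A|%:R * (f A + c).
  under eq_bigr do rewrite -addrA -opprD.
  by rewrite sumrB mulr_sumr sumr_const mulr_natl.
have card_le : #|O :\: A|%:R * (f A + c) <= k%:R * f A + k%:R * c.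
  rewrite -mulrDr ler_wpM2r ?(addr_ge0 fA_ge0 c_ge0) //.
  by rewrite ler_nat -cardO subset_leq_card ?subsetDl.
rewrite -(ler_pM2l (_ : 0 < k%:R :> R)) ?ltr0n //.
rewrite [k%:R * (_ + _ + _)]mulrDr [k%:R * (_ + _)]mulrDr.
lra.
Qed.

End Invariant.

Section Bounds.
Hypothesis k_gt1 : (1 < k)%N.

Lemma pairs_norm_gt0 : 0 < k%:R * (k%:R - 1) :> R.
Proof. by rewrite mulr_gt0 ?ltr0n ?subr_gt0 ?ltr1n // ltnW. Qed.

Lemma gain_ge_relevance (divmax : R) (A : {set 'I_n}) o :
  (forall i j, i != j -> mu * (1 - lam) * dotv (p i) (p j) <= divmax) ->
  o \notin A ->
  relevance o - 2 * divmax / (k%:R * (k%:R - 1)) * #|A|%:R <= gain A o.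
Proof.
move=> div_le oA.
have w_ge0 : 0 <= 2 / (k%:R * (k%:R - 1)) :> R by rewrite divr_ge0 ?(ltW pairs_norm_gt0).
rewrite /Defs.gain /relevance lerD2l lerN2 mulr_sumr mulr_natr -sumr_const.
apply: ler_sum => j jA.
have oj : o != j by apply: contraNneq oA => ->.
have -> : 2 * mu * (1 - lam) / (k%:R * (k%:R - 1)) * dotv (p o) (p j) =
    mu * (1 - lam) * dotv (p o) (p j) * (2 / (k%:R * (k%:R - 1))) by ring.
by rewrite [2 * divmax / _]mulrAC [leRHS]mulrC ler_wpM2r // div_le.
Qed.

Lemma favg_le_sum_relevance (S : {set 'I_n}) :
  lam <= 1 -> 0 <= mu -> (forall i j, 0 <= dotv (p i) (p j)) ->
  f S <= \sum_(i in S) relevance i.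
Proof.
move=> lam_le1 mu_ge0 pp_ge0.
rewrite /favg /relevance -mulr_sumr gerBl mulr_ge0 ?sumr_ge0 // => [|i _].
  by rewrite divr_ge0 ?(ltW pairs_norm_gt0) // !mulr_ge0 // subr_ge0.
exact: sumr_ge0.
Qed.

End Bounds.

End DualGreedyAnalysis.

Theorem theorem2 (R : realFieldType) (d n : nat) (p : 'I_n -> 'rV[R]_d)
  (q : 'rV[R]_d) (k : nat) (lam mu : R) (Sstar S : {set 'I_n}) (divmax : R) :
  injective p ->
  (1 < k)%N -> (k <= n)%N ->
  0 <= lam -> lam <= 1 -> 0 < mu ->
  (forall i j, 0 <= dotv (p i) (p j)) ->
  (forall i, 0 <= dotv (p i) q) ->
  (forall i, 0 <= dotv q (p i)) ->
  0 <= dotv q q ->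
  #|Sstar| = k ->
  (forall T : {set 'I_n}, #|T| = k -> favg p q k lam mu T <= favg p q k lam mu Sstar) ->
  (exists i j, i != j /\ divmax = mu * (1 - lam) * dotv (p i) (p j)) ->
  (forall i j, i != j -> mu * (1 - lam) * dotv (p i) (p j) <= divmax) ->
  dualgreedy_output p q k lam mu S ->
  favg p q k lam mu S >= 1 / 4 * favg p q k lam mu Sstar - 3 / 4 * divmax.
Proof.
move=> _ k_gt1 _ lam_ge0 lam_le1 mu_gt0 pp_ge0 pq_ge0 _ _ cardO _ [i [j [_ divmaxE]]]
  div_le [S1 [S2 [reach [stop1 stop2] _ [le1 le2]]]].
have divmax_ge0 : 0 <= divmax by rewrite divmaxE !mulr_ge0 ?subr_ge0 // ltW.
have kk_gt0 := pairs_norm_gt0 R k_gt1.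
set e := 2 * divmax / (k%:R * (k%:R - 1)).
have e_ge0 : 0 <= e by rewrite /e divr_ge0 ?(ltW kk_gt0) // mulr_ge0.
have slack_eq : e * (k%:R * (k%:R - 1)) / 2 = divmax.
  by rewrite /e divfK ?gt_eqF // mulrC mulKf ?pnatr_eq0.
have gain_ge := gain_ge_relevance q k_gt1 div_le.
have /= [inv12 inv21] := dg_reach_invariant Sstar e_ge0 gain_ge reach.
have [disj12 _ _ _ _] := inv12.
have := dg_stopped_sum_le e_ge0 gain_ge (ltnW k_gt1) cardO inv12 stop1.
have := dg_stopped_sum_le e_ge0 gain_ge (ltnW k_gt1) cardO inv21 stop2.
have := sum_le_sumD_disjoint Sstar disj12 (fun o => relevance_ge0 k lam_ge0 (pq_ge0 o)).
have := favg_le_sum_relevance q k_gt1 Sstar lam_le1 (ltW mu_gt0) pp_ge0.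
rewrite slack_eq; lra.
Qed.
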